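(* Let ${\bf p}=({\bf p}_1,\dots,{\bf p}_n)$ and ${\bf q}=({\bf q}_1,\dots,{\bf q}_m)$ be configurations in some Euclidean space $\mathbb R^k$ and suppose there are strictly positive numbers $\lambda_1,\dots,\lambda_n,\mu_1,\dots,\mu_m$ with $$\sum_{i=1}^n\lambda_i\hat{\bf p}_i\hat{\bf p}_i^t=\sum_{j=1}^m\mu_j\hat{\bf q}_j\hat{\bf q}_j^t .$$ Then the framework $(K(n,m),{\bf p},{\bf q})$ is super stable, hence universally rigid, and the affine span of ${\bf p}$ equals the affine span of ${\bf q}$.
   Context: For ${\bf x}\in\mathbb R^k$, $\hat{\bf x}$ is ${\bf x}$ with a $1$ appended as last coordinate. $(K(n,m),{\bf p},{\bf q})$ is the framework with bars joining ${\bf p}_i$ to ${\bf q}_j$ for all $i,j$, $N=n+m$ vertices. An equilibrium stress assigns scalars $\omega_{ij}=\omega_{ji}$ to edges ($0$ on non-edges) with $\sum_i\omega_{ij}({\bf p}_i-{\bf p}_j)=0$ at every vertex $j$; its stress matrix has off-diagonal entries $-\omega_{ij}$ and zero row sums. Nonzero vectors in $\mathbb R^d$ lie on a conic at infinity if some nonzero symmetric $d\times d$ matrix $Q$ satisfies ${\bf v}^tQ{\bf v}=0$ for all of them. A framework with $N$ vertices whose affine span has dimension $d$ is super stable if, after placing it rigidly in $\mathbb R^d$ (its affine span), it has an equilibrium stress with positive semidefinite stress matrix of rank $N-d-1$ and its edge vectors do not lie on a conic at infinity of $\mathbb R^d$. A framework is universally rigid if every configuration in any $\mathbb R^D$ with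 the same edge lengths has all pairwise distances equal to those of the original. *)

From HB Require Import structures.
From mathcomp Require Import all_boot all_order all_algebra.
Set Implicit Arguments. Unset Strict Implicit. Unset Printing Implicit Defensive.
Import Order.TTheory GRing.Theory Num.Theory.
Local Open Scope ring_scope.

Definition sqnorm (R : ringType) (D : nat) (u : 'rV[R]_D) : R := (u *m u^T) 0 0.

Definition hat (R : ringType) (k : nat) (x : 'rV[R]_k) : 'rV[R]_(k + 1) :=
  row_mx x (const_mx 1).

Definition in_affine_span (R : ringType) (n D : nat) (p : 'I_n -> 'rV[R]_D)
  (y : 'rV[R]_D) : Prop :=
  exists a : 'I_n -> R, \sum_(i < n) a i = 1 /\ y = \sum_(i < n) a i *: p i.

(* the linear space parallel to the affine span: span of all differences *)
Definition dir_space (R : fieldType) (N D : nat) (x : 'I_N -> 'rV[R]_D) : 'M[R]_D :=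
  (\sum_(i < N) \sum_(j < N) <<x i - x j>>)%MS.

Definition is_equilibrium_stress (R : ringType) (N D : nat) (adj : rel 'I_N)
  (x : 'I_N -> 'rV[R]_D) (w : 'I_N -> 'I_N -> R) : Prop :=
  (forall i j, w i j = w j i) /\
  (forall i j, ~~ adj i j -> w i j = 0) /\
  (forall j : 'I_N, \sum_(i < N) w i j *: (x i - x j) = 0).

Definition stress_matrix (R : ringType) (N : nat) (w : 'I_N -> 'I_N -> R) : 'M[R]_N :=
  \matrix_(i, j) if i == j then \sum_(l < N | l != i) w i l else - w i j.

Definition psd (R : numDomainType) (N : nat) (M : 'M[R]_N) : Prop :=
  forall v : 'rV[R]_N, 0 <= (v *m M *m v^T) 0 0.

Definition on_conic_at_infinity (R : ringType) (d : nat) (P : 'rV[R]_d -> Prop) : Prop :=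
  exists Q : 'M[R]_d, Q^T = Q /\ Q != 0 /\
    forall v, P v -> (v *m Q *m v^T) 0 0 = 0.

(* A rigid placement of the framework in R^d, d = dim of the
   affine span, is given (up to a translation, irrelevant for all conditions)
   by x_i |-> x_i B^T where the rows of B are an orthonormal basis of the
   direction space of the affine span. *)
Definition super_stable (R : rcfType) (N D : nat) (adj : rel 'I_N)
  (x : 'I_N -> 'rV[R]_D) : Prop :=
  exists B : 'M[R]_(\rank (dir_space x), D),
    B *m B^T = 1%:M /\ (B == dir_space x)%MS /\
    let y := fun i => x i *m B^T in
    (exists w : 'I_N -> 'I_N -> R,
        is_equilibrium_stress adj y w /\
        psd (stress_matrix w) /\
        \rank (stress_matrix w) = (N - \rank (dir_space x) - 1)%N) /\
    ~ on_conic_at_infinity (fun v => exists i j, adj i j /\ v = y i - y j).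

Definition universally_rigid (R : rcfType) (N D : nat) (adj : rel 'I_N)
  (x : 'I_N -> 'rV[R]_D) : Prop :=
  forall (D' : nat) (z : 'I_N -> 'rV[R]_D'),
    (forall i j, adj i j -> sqnorm (z i - z j) = sqnorm (x i - x j)) ->
    forall i j, sqnorm (z i - z j) = sqnorm (x i - x j).

(* complete bipartite graph K(n,m) on 'I_(n+m): first n vertices vs last m *)
Definition Knm_adj (n m : nat) : rel 'I_(n + m) :=
  fun i j => (val i < n)%N != (val j < n)%N.

Definition Knm_config (R : Type) (n m D : nat) (p : 'I_n -> 'rV[R]_D)
  (q : 'I_m -> 'rV[R]_D) : 'I_(n + m) -> 'rV[R]_D :=
  fun i => match split i with inl a => p a | inr b => q b end.

Arguments Knm_adj n m : clear implicits.

(* Let D > 0 be the diagonal matrix of the weights lambda, mu and S the diagonal sign matrix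
   (+1 on the p side, -1 on the q side); the hypothesis says X^T D S X = 0 for the matrix X of
   lifted points.  Factor X = Z E with Z of full column rank; then Z^T D S Z = 0, G = Z^T D Z is
   invertible and P = Z G^-1 Z^T D is the D-orthogonal projection onto col Z.  The matrix
     Omega = D - D P + S D P S = (1 - P)^T D (1 - P) + (P S)^T D (P S)
   is positive semidefinite with kernel col Z and vanishes between distinct vertices of the same
   side, so it is the stress matrix of a stress of K(n,m) of rank N - d - 1.  As Z^T D S Z = 0,
   either side alone carries half of G, so each side affinely spans the whole configuration.  A
   quadratic form vanishing on the bars p_i - q_j then vanishes, by polarization, on all pairs
   (p_i - p_i', q_j - q_j'), hence on the whole direction space: there is no conic at infinity.
   Finally, a configuration z with the same bar lengths has zero stress energy, which forces
   z = Z L, and the same polarization argument applied to L L^T - E E^T shows that z is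
   congruent to the framework. *)

From HB Require Import structures.
From mathcomp Require Import all_boot all_order all_algebra ring lra zify.
Import Order.TTheory GRing.Theory Num.Theory.
Local Open Scope ring_scope.
Set Implicit Arguments. Unset Strict Implicit. Unset Printing Implicit Defensive.

Section PositiveDiagonalForms.
Variable R : realFieldType.

Lemma sqnormE D (u : 'rV[R]_D) : sqnorm u = \sum_j u 0 j ^+ 2.
Proof. by rewrite /sqnorm mxE; apply: eq_bigr => j _; rewrite mxE expr2. Qed.

Lemma sqnorm_ge0 D (u : 'rV[R]_D) : 0 <= sqnorm u.
Proof. by rewrite sqnormE; apply: sumr_ge0 => j _; exact: sqr_ge0. Qed.

Lemma sqnorm_eq0 D (u : 'rV[R]_D) : (sqnorm u == 0) = (u == 0).
Proof.
apply/eqP/eqP => [|->]; last by rewrite /sqnorm mul0mx mxE.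
rewrite sqnormE => u0; apply/rowP => j; rewrite mxE.
by apply/eqP; rewrite -sqrf_eq0; apply/eqP/(psumr_eq0P _ u0) => // i _; exact: sqr_ge0.
Qed.

Variables (N : nat) (dv : 'rV[R]_N).
Hypothesis dv_gt0 : forall l, 0 < dv 0 l.

Lemma mxtrace_diag_form c (F : 'M[R]_(N, c)) :
  \tr (F^T *m diag_mx dv *m F) = \sum_(j < c) \sum_(l < N) dv 0 l * F l j ^+ 2.
Proof.
apply: eq_bigr => j _; rewrite mxE; apply: eq_bigr => l _.
by rewrite mul_mx_diag !mxE; ring.
Qed.

Lemma diag_form_term_ge0 c (F : 'M[R]_(N, c)) l j : 0 <= dv 0 l * F l j ^+ 2.
Proof. by rewrite mulr_ge0 ?sqr_ge0 ?ltW. Qed.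

Lemma diag_form_ge0 c (F : 'M[R]_(N, c)) : 0 <= \tr (F^T *m diag_mx dv *m F).
Proof.
rewrite mxtrace_diag_form; apply: sumr_ge0 => j _; apply: sumr_ge0 => l _.
exact: diag_form_term_ge0.
Qed.

Lemma diag_form_eq0 c (F : 'M[R]_(N, c)) :
  \tr (F^T *m diag_mx dv *m F) = 0 -> F = 0.
Proof.
rewrite mxtrace_diag_form => F0; apply/matrixP => l j; rewrite mxE.
have Fj0 : \sum_(l' < N) dv 0 l' * F l' j ^+ 2 = 0.
  apply: (psumr_eq0P _ F0) => // i _.
  by apply: sumr_ge0 => l' _; exact: diag_form_term_ge0.
have /eqP := psumr_eq0P (fun l' _ => diag_form_term_ge0 F l' j) Fj0 (i := l) isT.
by rewrite mulf_eq0 sqrf_eq0 gt_eqF //= => /eqP.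
Qed.

Lemma submx_diag_form c (A : 'M[R]_(N, c)) : (A <= A^T *m diag_mx dv *m A)%MS.
Proof.
rewrite submxE; set C := cokermx _.
apply/eqP/diag_form_eq0; rewrite trmx_mul.
have -> : C^T *m A^T *m diag_mx dv *m (A *m C) =
          C^T *m ((A^T *m diag_mx dv *m A) *m C) by rewrite !mulmxA.
by rewrite mulmx_coker mulmx0 mxtrace0.
Qed.

End PositiveDiagonalForms.

Section OrthonormalBasis.
Variable R : rcfType.

Lemma row_free_col_mx1 r D (a : 'rV[R]_D) (A : 'M[R]_(r, D)) :
  row_free (col_mx a A) -> row_free A /\ ~~ (a <= A)%MS.
Proof.
rewrite /row_free => /eqP rk_aA.
have rk_le : (\rank (col_mx a A) <= \rank a + \rank A)%N.
  by rewrite -addsmxE; exact: mxrank_adds_leqif.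
have := rank_leq_row a; have := rank_leq_row A; split; first by apply/eqP; lia.
apply/negP => aA; have /mxrankS : (col_mx a A <= A)%MS by rewrite col_mx_sub aA submx_refl.
lia.
Qed.

Lemma orthonormal_extend r D (B : 'M[R]_(r, D)) (a : 'rV[R]_D) :
  B *m B^T = 1%:M -> ~~ (a <= B)%MS ->
  exists b : 'rV[R]_D, col_mx b B *m (col_mx b B)^T = 1%:M /\
                       (col_mx b B == col_mx a B)%MS.
Proof.
move=> BBt aB.
pose c := a - a *m B^T *m B.
have cBt : c *m B^T = 0 by rewrite mulmxBl -(mulmxA _ B) BBt mulmx1 subrr.
have c_gt0 : 0 < sqnorm c.
  rewrite lt_def sqnorm_ge0 sqnorm_eq0 andbT; apply: contraNneq aB => c0.
  by rewrite -[a](subrK (a *m B^T *m B)) -/c c0 add0r submxMl.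
pose b := (Num.sqrt (sqnorm c))^-1 *: c.
have sqrt_neq0 : Num.sqrt (sqnorm c) != 0 by rewrite gt_eqF ?sqrtr_gt0.
have bBt : b *m B^T = 0 by rewrite -scalemxAl cBt scaler0.
have bbt : b *m b^T = 1%:M.
  rewrite [b *m _]mx11_scalar /b linearZ /= -scalemxAl -scalemxAr scalerA mxE.
  by rewrite -expr2 exprVn sqr_sqrtr ?sqnorm_ge0 // mulVf ?gt_eqF.
have Bbt : B *m b^T = 0 by rewrite -[B]trmxK -trmx_mul bBt trmx0.
exists b; split.
  by rewrite tr_col_mx mul_col_row bbt bBt Bbt BBt -scalar_mx_block.
have a_def : a = Num.sqrt (sqnorm c) *: b + a *m B^T *m B.
  by rewrite /b scalerA mulfV // scale1r subrK.
rewrite /eqmx !col_mx_sub -!addsmxE !addsmxSr !andbT; apply/andP; split.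
  rewrite scalemx_sub // addmx_sub ?addsmxSl // eqmx_opp.
  by apply: submx_trans (addsmxSr a B); exact: submxMl.
rewrite a_def addmx_sub ?(scalemx_sub _ (addsmxSl b B)) //.
by apply: submx_trans (addsmxSr b B); exact: submxMl.
Qed.

Lemma orthonormal_basis r D (A : 'M[R]_(r, D)) : row_free A ->
  exists B : 'M[R]_(r, D), B *m B^T = 1%:M /\ (B == A)%MS.
Proof.
elim: r A => [|r IH] A freeA.
  by exists A; rewrite submx_refl; split=> //; apply/matrixP => [[]].
move: A freeA; rewrite -[r.+1]/(1 + r)%N => A.
rewrite -[A]vsubmxK; move: (usubmx A) (dsubmx A) => a A' freeA.
have [freeA' aA'] := row_free_col_mx1 freeA.
have [B' [B'B't /eqmxP eqB']] := IH _ freeA'.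
rewrite -eqB' in aA'.
have [b [bB_orth eq_bB]] := orthonormal_extend B'B't aA'.
exists (col_mx b B'); split => //; apply/eqmxP; apply: eqmx_trans (eqmxP eq_bB) _.
apply: eqmx_trans (eqmx_sym (addsmxE a B')) _.
exact: eqmx_trans (adds_eqmx (eqmx_refl a) eqB') (addsmxE a A').
Qed.

End OrthonormalBasis.

Lemma mx11_eq0 (V : nmodType) (M : 'M[V]_1) : (M == 0) = (M 0 0 == 0).
Proof.
apply/eqP/eqP => [->|M00]; first by rewrite mxE.
by apply/matrixP => i j; rewrite !ord1 M00 mxE.
Qed.

Section BipartiteConic.
Variables (R : realFieldType) (N c : nat) (a : 'I_N -> 'rV[R]_c) (s : 'I_N -> bool).
Variable Q : 'M[R]_c.
Hypothesis Q_sym : Q^T = Q.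

Definition qform (u v : 'rV[R]_c) := (u *m Q *m v^T) 0 0.

Definition side_dir (sg : bool) :=
  (\sum_(l | s l == sg) \sum_(l' | s l' == sg) <<a l - a l'>>)%MS.

Lemma qformC u v : qform u v = qform v u.
Proof.
by rewrite /qform -[u *m Q *m v^T]trmxK mxE !trmx_mul trmxK Q_sym mulmxA.
Qed.

Lemma qformBl u1 u2 v : qform (u1 - u2) v = qform u1 v - qform u2 v.
Proof. by rewrite /qform !mulmxBl !mxE. Qed.

Lemma qformBr u v1 v2 : qform u (v1 - v2) = qform u v1 - qform u v2.
Proof. by rewrite /qform linearB /= mulmxBr !mxE. Qed.

Lemma sub_kermx_qform u v : (v <= kermx (Q *m u^T))%MS = (qform u v == 0).
Proof. by rewrite sub_kermx qformC /qform mulmxA mx11_eq0. Qed.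

Lemma qform_row1 i j : qform (row i 1%:M) (row j 1%:M) = Q i j.
Proof. by rewrite /qform !row1 -rowE trmx_delta -colE !mxE. Qed.

Hypothesis qform_edge0 : forall i j, s i != s j -> qform (a i - a j) (a i - a j) = 0.

(* Polarization over the four bars l h, l h', l' h, l' h'. *)
Lemma qform_cross_diff l l' h h' sg :
  s l = sg -> s l' = sg -> s h = ~~ sg -> s h' = ~~ sg ->
  qform (a l - a l') (a h - a h') = 0.
Proof.
move=> sl sl' sh sh'.
have opp x y : s x = sg -> s y = ~~ sg -> s x != s y by move=> -> ->; case: (sg).
have := qform_edge0 (opp _ _ sl sh); have := qform_edge0 (opp _ _ sl sh').
have := qform_edge0 (opp _ _ sl' sh); have := qform_edge0 (opp _ _ sl' sh').
rewrite !(qformBl, qformBr) (qformC (a h)) (qformC (a h')).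
rewrite (qformC (a h) (a l)) (qformC (a h') (a l)); lra.
Qed.

Lemma qform_side_dir sg u v :
  (u <= side_dir sg)%MS -> (v <= side_dir (~~ sg))%MS -> qform u v = 0.
Proof.
move=> u_sg v_sg.
have diff_v l l' : s l == sg -> s l' == sg -> qform (a l - a l') v = 0.
  move=> /eqP sl /eqP sl'; apply/eqP; rewrite -sub_kermx_qform.
  apply: submx_trans v_sg _; apply/sumsmx_subP => h /eqP sh.
  apply/sumsmx_subP => h' /eqP sh'.
  by rewrite genmxE sub_kermx_qform (qform_cross_diff sl sl' sh sh').
rewrite qformC; apply/eqP; rewrite -sub_kermx_qform; apply: submx_trans u_sg _.
apply/sumsmx_subP => l sl; apply/sumsmx_subP => l' sl'.
by rewrite genmxE sub_kermx_qform qformC diff_v.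
Qed.

End BipartiteConic.

Lemma mul_tr_diag_mx_sum (R : comPzRingType) N a b (A : 'M[R]_(N, a)) (B : 'M[R]_(N, b))
    (v : 'rV[R]_N) :
  A^T *m diag_mx v *m B = \sum_(l < N) v 0 l *: ((row l A)^T *m row l B).
Proof.
apply/matrixP => i j; rewrite mxE summxE; apply: eq_bigr => l _.
by rewrite mul_mx_diag !mxE big_ord1 !mxE; ring.
Qed.

Lemma mxtrace11 (V : nmodType) (M : 'M[V]_1) : \tr M = M 0 0.
Proof. exact: big_ord1. Qed.

Definition bipartite_adj N (s : 'I_N -> bool) : rel 'I_N := fun i j => s i != s j.

Section SignedMomentFramework.
Variables (R : rcfType) (N k : nat) (x : 'I_N -> 'rV[R]_k).
Variables (s : 'I_N -> bool) (d : 'I_N -> R).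
Hypothesis d_gt0 : forall i, 0 < d i.
Hypothesis signed_moment0 :
  \sum_(i < N) (if s i then d i else - d i) *: ((hat (x i))^T *m hat (x i)) = 0.

Definition dw : 'rV[R]_N := \row_i d i.
Local Notation Dw := (diag_mx dw).
Definition Sg := diag_mx (\row_i (if s i then 1 else -1) : 'rV[R]_N).
Definition Xmx : 'M[R]_(N, k) := \matrix_i x i.
Definition Xhat : 'M[R]_(N, k + 1) := row_mx Xmx (const_mx 1).
Definition rk := \rank Xhat.
Definition Ebase : 'M[R]_(rk, k + 1) := locked (row_base Xhat).
Definition Zc : 'M[R]_(N, rk) := locked (Xhat *m pinvmx Ebase).
Definition Epts : 'M[R]_(rk, k) := lsubmx Ebase.
Definition Eone : 'M[R]_(rk, 1) := rsubmx Ebase.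

Lemma dw_gt0 l : 0 < dw 0 l. Proof. by rewrite mxE. Qed.

Lemma Dw_sym : Dw^T = Dw. Proof. exact: tr_diag_mx. Qed.
Lemma Sg_sym : Sg^T = Sg. Proof. exact: tr_diag_mx. Qed.

Lemma Ebase_free : row_free Ebase.
Proof. by rewrite /Ebase -lock row_base_free. Qed.

Lemma Xhat_factor : Xhat = Zc *m Ebase.
Proof. by rewrite /Zc -lock mulmxKpV // /Ebase -lock eq_row_base. Qed.

Lemma Xmx_factor : Xmx = Zc *m Epts.
Proof.
by have := Xhat_factor; rewrite -[Ebase]hsubmxK mul_mx_row => /eq_row_mx[].
Qed.

Lemma Zc_Eone : Zc *m Eone = const_mx 1.
Proof.
by have := Xhat_factor; rewrite -[Ebase]hsubmxK mul_mx_row => /eq_row_mx[].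
Qed.

Lemma x_coords i : x i = row i Zc *m Epts.
Proof. by rewrite -row_mul -Xmx_factor rowK. Qed.

Lemma row_Zc_Eone i : row i Zc *m Eone = const_mx 1.
Proof. by rewrite -row_mul Zc_Eone; apply/rowP => j; rewrite !mxE. Qed.

Lemma row_Xhat i : row i Xhat = hat (x i).
Proof.
by rewrite row_row_mx rowK /hat; congr row_mx; apply/rowP => j; rewrite !mxE.
Qed.

Lemma Xhat_signed_gram : Xhat^T *m (Dw *m Sg) *m Xhat = 0.
Proof.
rewrite mulmx_diag mul_tr_diag_mx_sum -[RHS]signed_moment0; apply: eq_bigr => l _.
by rewrite !mxE row_Xhat; case: (s l); rewrite ?mulr1 ?mulrN1.
Qed.

Lemma Zc_signed_gram : Zc^T *m (Dw *m Sg) *m Zc = 0.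
Proof.
set M := Zc^T *m _ *m Zc.
have EME0 : Ebase^T *m M *m Ebase = 0.
  by rewrite /M -Xhat_signed_gram Xhat_factor trmx_mul !mulmxA.
move/eqP: EME0; rewrite mulmx_free_eq0 ?Ebase_free // => /eqP MtE0.
have : M^T *m Ebase = 0 by rewrite -[M^T *m Ebase]trmxK trmx_mul trmxK MtE0 trmx0.
by move/eqP; rewrite mulmx_free_eq0 ?Ebase_free // => /eqP/(congr1 trmx); rewrite trmxK trmx0.
Qed.

Lemma rank_Zc : \rank Zc = rk.
Proof. by apply/eqP; rewrite eqn_leq rank_leq_col {1}/rk Xhat_factor mxrankM_maxl. Qed.

Definition Gram := Zc^T *m Dw *m Zc.
Definition Proj := locked (Zc *m invmx Gram *m Zc^T *m Dw).

Lemma ProjE : Proj = Zc *m invmx Gram *m Zc^T *m Dw. Proof. by rewrite /Proj -lock. Qed.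

Lemma Gram_unit : Gram \in unitmx.
Proof.
rewrite -row_free_unit /row_free eqn_leq rank_leq_row /= -{1}rank_Zc.
exact/mxrankS/submx_diag_form/dw_gt0.
Qed.

Lemma Gram_sym : Gram^T = Gram.
Proof. by rewrite !trmx_mul trmxK Dw_sym mulmxA. Qed.

Lemma invGram_sym : (invmx Gram)^T = invmx Gram.
Proof. by rewrite trmx_inv Gram_sym. Qed.

Lemma Proj_Zc : Proj *m Zc = Zc.
Proof.
have -> : Proj *m Zc = Zc *m (invmx Gram *m Gram) by rewrite ProjE /Gram !mulmxA.
by rewrite mulVmx ?Gram_unit ?mulmx1.
Qed.

Lemma Proj_Sg_Zc : Proj *m Sg *m Zc = 0.
Proof.
have -> : Proj *m Sg *m Zc = Zc *m invmx Gram *m (Zc^T *m (Dw *m Sg) *m Zc).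
  by rewrite ProjE !mulmxA.
by rewrite Zc_signed_gram mulmx0.
Qed.

Lemma trProj_Dw : Proj^T *m Dw = Dw *m Proj.
Proof. by rewrite ProjE !trmx_mul !trmxK Dw_sym invGram_sym !mulmxA. Qed.

Lemma Proj_idem : Proj *m Proj = Proj.
Proof.
have -> : Proj *m Proj = Proj *m Zc *m invmx Gram *m Zc^T *m Dw.
  by rewrite {2}ProjE !mulmxA.
by rewrite Proj_Zc ProjE.
Qed.

(* The S-conjugated term cancels the same-side entries of D P. *)
Definition Omega := Dw - Dw *m Proj + Sg *m (Dw *m Proj) *m Sg.

Lemma Omega_Zc : Omega *m Zc = 0.
Proof.
rewrite /Omega mulmxDl mulmxBl -!mulmxA Proj_Zc.
have -> : Sg *m (Dw *m (Proj *m (Sg *m Zc))) = Sg *m Dw *m (Proj *m Sg *m Zc).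
  by rewrite !mulmxA.
by rewrite Proj_Sg_Zc mulmx0 addr0 subrr.
Qed.

Lemma Omega_sos :
  Omega = (1%:M - Proj)^T *m Dw *m (1%:M - Proj) + (Proj *m Sg)^T *m Dw *m (Proj *m Sg).
Proof.
congr (_ + _).
  rewrite [(1%:M - Proj)^T]linearB /= trmx1 mulmxBl mul1mx trProj_Dw mulmxBl !mulmxBr !mulmx1.
  by rewrite -mulmxA Proj_idem subrr subr0.
apply: esym.
by rewrite trmx_mul Sg_sym -(mulmxA Sg Proj^T Dw) trProj_Dw !mulmxA -(mulmxA _ Proj Proj) Proj_idem.
Qed.

Lemma Omega_sym : Omega^T = Omega.
Proof.
have form_sym m (F : 'M[R]_(N, m)) : (F^T *m Dw *m F)^T = F^T *m Dw *m F.
  by rewrite !trmx_mul trmxK Dw_sym mulmxA.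
by rewrite Omega_sos linearD /= !form_sym.
Qed.

Lemma OmegaC i j : Omega i j = Omega j i.
Proof. by rewrite -{1}Omega_sym mxE. Qed.

Lemma Omega_rowsum i : \sum_j Omega i j = 0.
Proof.
transitivity ((Omega *m (const_mx 1 : 'cV_N)) i 0).
  by rewrite mxE; apply: eq_bigr => j _; rewrite [const_mx _ _ _]mxE mulr1.
by rewrite -Zc_Eone mulmxA Omega_Zc mul0mx mxE.
Qed.

Lemma Omega_same_side i j : i != j -> s i = s j -> Omega i j = 0.
Proof.
move=> neq_ij sij; rewrite /Omega /Sg (mul_mx_diag (diag_mx _ *m _)) mul_diag_mx.
by rewrite !mxE (negbTE neq_ij) mulr0n sij; case: (s j); ring.
Qed.

Lemma Omega_psd_form p (K : 'M[R]_(p, N)) : K *m Omega *m K^T =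
  ((1%:M - Proj) *m K^T)^T *m Dw *m ((1%:M - Proj) *m K^T)
  + ((Proj *m Sg) *m K^T)^T *m Dw *m ((Proj *m Sg) *m K^T).
Proof.
have conj_form (A : 'M[R]_N) :
    K *m (A^T *m Dw *m A) *m K^T = (A *m K^T)^T *m Dw *m (A *m K^T).
  by rewrite !trmx_mul trmxK !mulmxA.
by rewrite Omega_sos (mulmxDr K) (mulmxDl _ _ K^T) !conj_form.
Qed.

Lemma Omega_psd : psd Omega.
Proof.
move=> v; rewrite -mxtrace11 Omega_psd_form mxtraceD.
by rewrite addr_ge0 ?(diag_form_ge0 dw_gt0).
Qed.

Lemma Omega_form_eq0 p (K : 'M[R]_(p, N)) :
  \tr (K *m Omega *m K^T) = 0 -> K^T = Proj *m K^T.
Proof.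
rewrite Omega_psd_form mxtraceD => /eqP.
rewrite paddr_eq0 ?(diag_form_ge0 dw_gt0) // => /andP[/eqP/(diag_form_eq0 dw_gt0) PK0 _].
by apply/eqP; rewrite -subr_eq0 -[X in X - _]mul1mx -mulmxBl PK0.
Qed.

Lemma kermx_Omega : (kermx Omega == Zc^T)%MS.
Proof.
apply/andP; split; last first.
  by rewrite sub_kermx -[Zc^T *m Omega]trmxK trmx_mul trmxK Omega_sym Omega_Zc trmx0.
have KP : (kermx Omega)^T = Proj *m (kermx Omega)^T.
  by apply: Omega_form_eq0; rewrite mulmx_ker mul0mx mxtrace0.
rewrite -[kermx Omega]trmxK KP ProjE !trmx_mul !trmxK Dw_sym invGram_sym.
by rewrite !mulmxA submxMl.
Qed.

Lemma rank_Omega_rk : \rank Omega = (N - rk)%N.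
Proof.
have := eqmx_rank kermx_Omega; rewrite mxrank_ker mxrank_tr rank_Zc.
have := rank_leq_row Omega; lia.
Qed.

Definition stress_w (i j : 'I_N) : R := if s i != s j then - Omega i j else 0.

Lemma stress_w_offdiag i j : i != j -> stress_w i j = - Omega i j.
Proof.
rewrite /stress_w => neq_ij; case: ifP => // /negbFE/eqP sij.
by rewrite Omega_same_side // oppr0.
Qed.

Lemma stress_matrix_w : stress_matrix stress_w = Omega.
Proof.
apply/matrixP => i j; rewrite mxE; case: eqP => [<-|/eqP neq_ij]; last first.
  by rewrite stress_w_offdiag // opprK.
have := Omega_rowsum i; rewrite (bigD1 i) //= => /eqP; rewrite addr_eq0 => /eqP->.
rewrite -sumrN; apply: eq_bigr => l l_i; by rewrite stress_w_offdiag // eq_sym.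
Qed.

Lemma stress_w_equilibrium c (G : 'M[R]_(rk, c)) (y : 'I_N -> 'rV[R]_c) :
  (forall i, y i = row i Zc *m G) -> is_equilibrium_stress (bipartite_adj s) y stress_w.
Proof.
move=> y_coords.
split; first by move=> i j; rewrite /stress_w eq_sym OmegaC.
split; first by move=> i j /negbTE; rewrite /stress_w /bipartite_adj => ->.
move=> j.
have term i : stress_w i j *: (y i - y j) = Omega j i *: y j - Omega j i *: y i.
  have [->|neq_ij] := eqVneq i j; first by rewrite !subrr scaler0.
  by rewrite stress_w_offdiag // OmegaC scaleNr scalerBr opprB.
rewrite (eq_bigr _ (fun i _ => term i)) sumrB -scaler_suml Omega_rowsum scale0r sub0r.
have -> : \sum_i Omega j i *: y i = row j Omega *m (Zc *m G).
  by rewrite mulmx_sum_row; apply: eq_bigr => i _; rewrite y_coords row_mul [row _ _ _ _]mxE.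
by rewrite mulmxA -row_mul Omega_Zc row0 mul0mx oppr0.
Qed.

Definition side_dw (sg : bool) : 'rV[R]_N := \row_l (if s l == sg then d l else 0).

Lemma side_gram sg : Zc^T *m diag_mx (side_dw sg) *m Zc = 2^-1 *: Gram.
Proof.
have -> : diag_mx (side_dw sg) = 2^-1 *: (Dw + (if sg then 1 else -1) *: (Dw *m Sg)).
  rewrite /Sg mulmx_diag; apply/matrixP => i j; rewrite !mxE.
  have [->|neq_ij] := eqVneq i j; last by rewrite !mulr0n mulr0 addr0 mulr0.
  by rewrite !mulr1n; case: (s j); case: sg => /=; field.
rewrite -scalemxAr -scalemxAl mulmxDr mulmxDl -scalemxAr -scalemxAl Zc_signed_gram.
by rewrite scaler0 addr0.
Qed.

Lemma coords_on_side sg (u : 'rV[R]_rk) :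
  exists c : 'rV[R]_N, (forall l, s l != sg -> c 0 l = 0) /\ c *m Zc = u.
Proof.
exists (2 *: (u *m invmx Gram *m Zc^T *m diag_mx (side_dw sg))); split.
  by move=> l sl; rewrite mul_mx_diag !mxE (negbTE sl) !mulr0.
rewrite -scalemxAl -!mulmxA (mulmxA Zc^T) side_gram -scalemxAr -scalemxAr scalerA.
by rewrite mulfV ?pnatr_eq0 // scale1r mulVmx ?Gram_unit // mulmx1.
Qed.

Lemma sum_coords_Eone (c : 'rV[R]_N) : (c *m Zc *m Eone) 0 0 = \sum_l c 0 l.
Proof. by rewrite -mulmxA Zc_Eone mxE; apply: eq_bigr => l _; rewrite mxE mulr1. Qed.

Lemma sub_side_dir c (G : 'M[R]_(rk, c)) sg (u : 'rV[R]_rk) : u *m Eone = 0 ->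
  (u *m G <= side_dir (fun l => row l Zc *m G) s sg)%MS.
Proof.
move=> uE0; have [cv [cv_side cvZ]] := coords_on_side sg u; rewrite -cvZ.
set y := fun l => row l Zc *m G.
have cvG : cv *m Zc *m G = \sum_l cv 0 l *: y l.
  by rewrite -mulmxA mulmx_sum_row; apply: eq_bigr => l _; rewrite row_mul.
have sum_cv0 : \sum_l cv 0 l = 0 by rewrite -sum_coords_Eone cvZ uE0 mxE.
have [l0 sl0 | no_side] := pickP (fun l => s l == sg); last first.
  rewrite cvG big1 ?sub0mx // => l _.
  by rewrite cv_side ?scale0r // no_side.
have -> : cv *m Zc *m G = \sum_l cv 0 l *: (y l - y l0).
  by rewrite cvG (eq_bigr _ (fun l _ => scalerBr _ _ _)) sumrB -scaler_suml sum_cv0 scale0r subr0.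
apply: summx_sub => l _; have [sl|sl] := boolP (s l == sg); last first.
  by rewrite cv_side ?scale0r ?sub0mx.
by apply/scalemx_sub/(sumsmx_sup l) => //; apply: (sumsmx_sup l0) => //; rewrite genmxE.
Qed.

Lemma dir_space_coords : (dir_space x == kermx Eone *m Epts)%MS.
Proof.
apply/andP; split.
  apply/sumsmx_subP => i _; apply/sumsmx_subP => j _; rewrite genmxE.
  rewrite !x_coords -mulmxBl; apply: submxMr.
  by rewrite sub_kermx mulmxBl !row_Zc_Eone subrr.
apply/row_subP => l; rewrite row_mul.
have kerE0 : row l (kermx Eone) *m Eone = 0 by rewrite -row_mul mulmx_ker row0.
apply: submx_trans (sub_side_dir Epts true kerE0) _.
apply/sumsmx_subP => i _; apply/sumsmx_subP => j _; rewrite genmxE.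
apply: (sumsmx_sup i) => //; apply: (sumsmx_sup j) => //.
by rewrite genmxE !x_coords.
Qed.

Lemma rank_Eone : (0 < N)%N -> \rank Eone = 1%N.
Proof.
move=> N_gt0; apply/eqP; rewrite eqn_leq rank_leq_col lt0n mxrank_eq0 /=.
apply: contraTneq isT => E0; have := row_Zc_Eone (Ordinal N_gt0).
by rewrite E0 mulmx0 => /rowP/(_ 0); rewrite !mxE => /eqP; rewrite eq_sym oner_eq0.
Qed.

Lemma rank_dir_space : \rank (dir_space x) = (rk - \rank Eone)%N.
Proof.
rewrite (eqmx_rank dir_space_coords) -mxrank_ker -(mxrankMfree _ Ebase_free).
have -> : kermx Eone *m Ebase = row_mx (kermx Eone *m Epts) 0.
  by rewrite -{1}[Ebase]hsubmxK mul_mx_row mulmx_ker.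
by rewrite rank_row_mx0.
Qed.

Lemma rank_Omega : \rank Omega = (N - \rank (dir_space x) - 1)%N.
Proof.
rewrite rank_Omega_rk rank_dir_space; have [N0|N_gt0] := posnP N.
  by rewrite N0.
by rewrite rank_Eone //; have := rank_leq_row Eone; rewrite rank_Eone //; lia.
Qed.

Lemma qform_ker_Eone c (G : 'M[R]_(rk, c)) (Q : 'M[R]_c) : Q^T = Q ->
    (forall i j, s i != s j ->
       qform Q (row i Zc *m G - row j Zc *m G) (row i Zc *m G - row j Zc *m G) = 0) ->
  forall u v, u *m Eone = 0 -> v *m Eone = 0 -> qform Q (u *m G) (v *m G) = 0.
Proof.
move=> Q_sym edge0 u v uE0 vE0.
apply: (qform_side_dir (a := fun l => row l Zc *m G) (sg := true) Q_sym edge0).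
  exact: sub_side_dir.
exact: sub_side_dir.
Qed.

Lemma bipartite_super_stable : super_stable (bipartite_adj s) x.
Proof.
have [B [BBt eqB]] := orthonormal_basis (row_base_free (dir_space x)).
have {}eqB : (B == dir_space x)%MS.
  by apply/eqmxP; exact: eqmx_trans (eqmxP eqB) (eq_row_base _).
exists B; split=> //; split=> //; set G := Epts *m B^T.
have y_coords i : x i *m B^T = row i Zc *m G by rewrite x_coords mulmxA.
split.
  exists stress_w; rewrite stress_matrix_w rank_Omega.
  by split; [exact: stress_w_equilibrium | split; [exact: Omega_psd |]].
move=> [Q [Q_sym [/eqP Q_neq0 Q_edge]]]; apply: Q_neq0.
have edge0 i j : s i != s j ->
    qform Q (row i Zc *m G - row j Zc *m G) (row i Zc *m G - row j Zc *m G) = 0.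
  by move=> sij; rewrite -!y_coords; apply: Q_edge; exists i, j.
have row1_coords l : exists2 u, u *m Eone = 0 & row l 1%:M = u *m G.
  have : (row l B <= kermx Eone *m Epts)%MS.
    by apply: submx_trans (row_sub l B) _; rewrite (eqmxP eqB) (eqmxP dir_space_coords).
  case/submxP => W rowB; exists (W *m kermx Eone); first by rewrite -mulmxA mulmx_ker mulmx0.
  by rewrite -BBt row_mul rowB /G !mulmxA.
apply/matrixP => a b; rewrite mxE -qform_row1.
have [u uE0 ->] := row1_coords a; have [v vE0 ->] := row1_coords b.
exact: qform_ker_Eone.
Qed.

Lemma Omega_sum_sqr (f : 'I_N -> R) :
  \sum_i \sum_j - Omega i j * (f i - f j) ^+ 2 = 2 * \sum_i \sum_j f i * Omega i j * f j.
Proof.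
transitivity (\sum_i (\sum_j 2 * (f i * Omega i j * f j)
                       - \sum_j Omega i j * f i ^+ 2 - \sum_j Omega i j * f j ^+ 2)).
  by apply: eq_bigr => i _; rewrite -!sumrB; apply: eq_bigr => j _; ring.
have rows0 : \sum_i \sum_j Omega i j * f i ^+ 2 = 0.
  by rewrite big1 // => i _; rewrite -mulr_suml Omega_rowsum mul0r.
have cols0 : \sum_i \sum_j Omega i j * f j ^+ 2 = 0.
  rewrite exchange_big big1 // => j _; rewrite -mulr_suml.
  by rewrite (eq_bigr (fun i => Omega j i)) ?Omega_rowsum ?mul0r // => i _; rewrite OmegaC.
by rewrite !sumrB rows0 cols0 !subr0 mulr_sumr; apply: eq_bigr => i _; rewrite mulr_sumr.
Qed.

Lemma stress_energy D (z : 'I_N -> 'rV[R]_D) :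
  \sum_i \sum_j stress_w i j * sqnorm (z i - z j) =
  2 * \tr ((\matrix_l z l)^T *m Omega *m \matrix_l z l).
Proof.
set Zz := \matrix_l z l.
have term i j : stress_w i j * sqnorm (z i - z j) =
    \sum_c - Omega i j * (Zz i c - Zz j c) ^+ 2.
  have [->|neq_ij] := eqVneq i j.
    by rewrite subrr /sqnorm mul0mx mxE mulr0 big1 // => c _; rewrite subrr expr0n mulr0.
  by rewrite stress_w_offdiag // sqnormE mulr_sumr; apply: eq_bigr => c _; rewrite !mxE.
rewrite (eq_bigr _ (fun i _ => eq_bigr _ (fun j _ => term i j))).
rewrite (eq_bigr _ (fun i _ => exchange_big _ _ _ _ _ _)) exchange_big /=.
rewrite mulr_sumr; apply: eq_bigr => c _; rewrite Omega_sum_sqr mxE; congr (_ * _).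
rewrite exchange_big; apply: eq_bigr => j _; rewrite [(Zz^T *m Omega) c j]mxE mulr_suml.
by apply: eq_bigr => i _; rewrite [Zz^T c i]mxE.
Qed.

Lemma Omega_energy0_coords D (z : 'I_N -> 'rV[R]_D) :
    \tr ((\matrix_l z l)^T *m Omega *m \matrix_l z l) = 0 ->
  exists L : 'M[R]_(rk, D), forall l, z l = row l Zc *m L.
Proof.
move=> energy0; have := Omega_form_eq0 (K := (\matrix_l z l)^T).
rewrite !trmxK => /(_ energy0) Zz_proj.
exists (invmx Gram *m Zc^T *m Dw *m \matrix_l z l) => l.
by rewrite -row_mul !mulmxA -ProjE -Zz_proj rowK.
Qed.

Lemma bipartite_universally_rigid : universally_rigid (bipartite_adj s) x.
Proof.
move=> D z z_edges i j.
have energy_x : \sum_i \sum_j stress_w i j * sqnorm (x i - x j) = 0.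
  rewrite stress_energy -/Xmx Xmx_factor trmx_mul -mulmxA (mulmxA Omega) Omega_Zc.
  by rewrite mul0mx mulmx0 mxtrace0 mulr0.
(* the stress vanishes off the bars, so z has the same stress energy as x *)
have energy_z : 2 * \tr ((\matrix_l z l)^T *m Omega *m \matrix_l z l) = 0.
  rewrite -stress_energy -[RHS]energy_x; apply: eq_bigr => i' _; apply: eq_bigr => j' _.
  by rewrite /stress_w; case: ifP => sij; rewrite ?mul0r ?z_edges.
have [L z_coords] : exists L : 'M[R]_(rk, D), forall l, z l = row l Zc *m L.
  by apply: Omega_energy0_coords; move/eqP: energy_z; rewrite mulf_eq0 pnatr_eq0 => /eqP.
pose Q := L *m L^T - Epts *m Epts^T.
have Q_sym : Q^T = Q by rewrite /Q [(_ - _)^T]linearB /= !trmx_mul !trmxK.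
have sqnorm_diff (u : 'rV[R]_rk) :
    sqnorm (u *m L) - sqnorm (u *m Epts) = qform Q (u *m 1%:M) (u *m 1%:M).
  by rewrite mulmx1 /qform /Q mulmxBr mulmxBl /sqnorm !trmx_mul !mulmxA !mxE.
have edge0 i' j' : s i' != s j' -> qform Q (row i' Zc *m 1%:M - row j' Zc *m 1%:M)
                                        (row i' Zc *m 1%:M - row j' Zc *m 1%:M) = 0.
  move=> sij; rewrite -mulmxBl -sqnorm_diff !mulmxBl -!z_coords -!x_coords.
  by rewrite z_edges ?subrr.
have diffE0 : (row i Zc - row j Zc) *m Eone = 0 by rewrite mulmxBl !row_Zc_Eone subrr.
have /eqP := qform_ker_Eone Q_sym edge0 diffE0 diffE0.
by rewrite -sqnorm_diff !mulmxBl -!z_coords -!x_coords subr_eq0 => /eqP.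
Qed.

Definition in_side_span (sg : bool) (y : 'rV[R]_k) :=
  exists c : 'I_N -> R, [/\ forall l, s l != sg -> c l = 0,
                           \sum_l c l = 1 & y = \sum_l c l *: x l].

Lemma in_side_span_switch sg sg' y : in_side_span sg y -> in_side_span sg' y.
Proof.
move=> [c [c_side c1 ->]]; pose cv : 'rV[R]_N := \row_l c l.
have [c' [c'_side c'Z]] := coords_on_side sg' (cv *m Zc).
have sum_cX (w : 'rV[R]_N) : w *m Xmx = \sum_l w 0 l *: x l.
  by rewrite mulmx_sum_row; apply: eq_bigr => l _; rewrite rowK.
exists (fun l => c' 0 l); split=> //.
  by rewrite -sum_coords_Eone c'Z sum_coords_Eone -c1; apply: eq_bigr => l _; rewrite mxE.
rewrite -sum_cX Xmx_factor mulmxA c'Z -mulmxA -Xmx_factor sum_cX.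
by apply: eq_bigr => l _; rewrite mxE.
Qed.

End SignedMomentFramework.

Lemma split_lshift n m (i : 'I_n) : split (lshift m i) = inl i.
Proof. exact: (unsplitK (inl i)). Qed.

Lemma split_rshift n m (j : 'I_m) : split (rshift n j) = inr j.
Proof. exact: (unsplitK (inr j)). Qed.

Definition Knm_side n m (l : 'I_(n + m)) : bool := (l < n)%N.
Arguments Knm_side n m : clear implicits.

Section CompleteBipartite.
Variables (R : rcfType) (n m k : nat) (p : 'I_n -> 'rV[R]_k) (q : 'I_m -> 'rV[R]_k).

Local Notation x := (Knm_config p q).

Lemma in_affine_span_left y : in_affine_span p y <-> in_side_span x (Knm_side n m) true y.
Proof.
split=> [[a [a1 ->]]|[c [c_side c1 ->]]].
  exists (fun l => if split l is inl i then a i else 0); split.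
  - by move=> l; rewrite /Knm_side; case: splitP.
  - rewrite big_split_ord /= [X in _ + X]big1 => [|j _]; last by rewrite split_rshift.
    by rewrite addr0 -a1; apply: eq_bigr => i _; rewrite split_lshift.
  - rewrite big_split_ord /= [X in _ + X]big1 => [|j _]; last by rewrite split_rshift scale0r.
    by rewrite addr0; apply: eq_bigr => i _; rewrite split_lshift /Knm_config split_lshift.
have c_right j : c (rshift n j) = 0 by rewrite c_side // /Knm_side /= ltnNge leq_addr.
exists (fun i => c (lshift m i)); split.
  by rewrite -c1 big_split_ord /= [X in _ + X]big1 ?addr0.
rewrite big_split_ord /= [X in _ + X]big1 => [|j _]; last by rewrite c_right scale0r.
by rewrite addr0; apply: eq_bigr => i _; rewrite /Knm_config split_lshift.
Qed.

Lemma in_affine_span_right y : in_affine_span q y <-> in_side_span x (Knm_side n m) false y.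
Proof.
split=> [[a [a1 ->]]|[c [c_side c1 ->]]].
  exists (fun l => if split l is inr j then a j else 0); split.
  - by move=> l; rewrite /Knm_side; case: splitP.
  - rewrite big_split_ord /= [X in X + _]big1 => [|i _]; last by rewrite split_lshift.
    by rewrite add0r -a1; apply: eq_bigr => j _; rewrite split_rshift.
  - rewrite big_split_ord /= [X in X + _]big1 => [|i _]; last by rewrite split_lshift scale0r.
    by rewrite add0r; apply: eq_bigr => j _; rewrite split_rshift /Knm_config split_rshift.
have c_left i : c (lshift m i) = 0 by rewrite c_side // /Knm_side /= ltn_ord.
exists (fun j => c (rshift n j)); split.
  by rewrite -c1 big_split_ord /= [X in X + _]big1 ?add0r.
rewrite big_split_ord /= [X in X + _]big1 => [|i _]; last by rewrite c_left scale0r.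
by rewrite add0r; apply: eq_bigr => j _; rewrite /Knm_config split_rshift.
Qed.

Variables (lambda : 'I_n -> R) (mu : 'I_m -> R).

Definition Knm_weights (l : 'I_(n + m)) : R :=
  match split l with inl i => lambda i | inr j => mu j end.

Lemma Knm_weights_gt0 :
  (forall i, 0 < lambda i) -> (forall j, 0 < mu j) -> forall l, 0 < Knm_weights l.
Proof. by move=> lambda_gt0 mu_gt0 l; rewrite /Knm_weights; case: split. Qed.

Lemma Knm_signed_moment0 :
  \sum_(i < n) lambda i *: ((hat (p i))^T *m hat (p i))
    = \sum_(j < m) mu j *: ((hat (q j))^T *m hat (q j)) ->
  \sum_l (if Knm_side n m l then Knm_weights l else - Knm_weights l) *:
    ((hat (x l))^T *m hat (x l)) = 0.
Proof.
move=> moment_eq; rewrite big_split_ord /=.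
rewrite (eq_bigr (fun i => lambda i *: ((hat (p i))^T *m hat (p i)))) => [|i _]; last first.
  by rewrite /Knm_side /= ltn_ord /Knm_weights /Knm_config split_lshift.
rewrite (eq_bigr (fun j => - (mu j *: ((hat (q j))^T *m hat (q j))))) => [|j _]; last first.
  by rewrite /Knm_side /= ltnNge leq_addr /Knm_weights /Knm_config split_rshift scaleNr.
by rewrite sumrN moment_eq subrr.
Qed.

End CompleteBipartite.

Theorem mainTheorem4 (R : rcfType) (n m k : nat)
  (p : 'I_n -> 'rV[R]_k) (q : 'I_m -> 'rV[R]_k)
  (lambda : 'I_n -> R) (mu : 'I_m -> R)
  (hlambda : forall i, 0 < lambda i) (hmu : forall j, 0 < mu j)
  (heq : \sum_(i < n) lambda i *: ((hat (p i))^T *m hat (p i))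
         = \sum_(j < m) mu j *: ((hat (q j))^T *m hat (q j))) :
  super_stable (Knm_adj n m) (Knm_config p q) /\
  universally_rigid (Knm_adj n m) (Knm_config p q) /\
  (forall y : 'rV[R]_k, in_affine_span p y <-> in_affine_span q y).
Proof.
have d_gt0 := Knm_weights_gt0 hlambda hmu.
have moment0 := Knm_signed_moment0 heq.
split; first exact: bipartite_super_stable d_gt0 moment0.
split; first exact: bipartite_universally_rigid d_gt0 moment0.
by move=> y; rewrite (in_affine_span_left p q) (in_affine_span_right p q);
  split; exact: (in_side_span_switch (s := Knm_side n m) d_gt0 moment0 _).
Qed.
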